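(* Let $\{F_x : x\in V(G)\}$ be a representation of a restricted frame graph $G$, and let $C$ be an induced cycle of $G$. Then there is a vertex $v\in V(C)$ such that $F_v$ contains the frame of every vertex in $V(C)\setminus N[v]$. Moreover, if $u\in V(C)$, $u\neq v$, is another vertex such that $F_u$ contains the frame of every vertex in $V(C)\setminus N[u]$, then $u$ is adjacent to $v$.
   Context: $N[v]=\{v\}\cup N(v)$. A frame is the boundary of an axis-parallel box $I\times J\subset\mathbb R^2$. A representation of a graph $G$ as a restricted frame graph is a family of frames $\{F_x : x\in V(G)\}$ with $xy\in E(G)$ iff $F_x\cap F_y\neq\emptyset$, satisfying: (1) corners of a frame do not coincide with any point of another frame; (2) the left side of any frame does not intersect any other frame; (3) if the right side of a frame intersects a second frame, this right side intersects both the top and the bottom side of the second frame; (4) if two frames have non-empty intersection, then no frame is entirely contained in the intersection of the two regions bounded by these two frames. A frame $F_1$ contains a frame $F_2$ if $F_1\cap F_2=\emptyset$ and $F_2$ lies in the region bounded by $F_1$. *)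

From HB Require Import structures.
From mathcomp Require Import all_boot all_order all_algebra.
From mathcomp Require Import reals.
Set Implicit Arguments. Unset Strict Implicit. Unset Printing Implicit Defensive.
Import Order.TTheory GRing.Theory Num.Theory.
Local Open Scope ring_scope.

Section Frames.
Variable R : realType.

(* A frame = boundary of the axis-parallel box [fl, fr] x [fb, ft],
   with nondegenerate intervals fl < fr and fb < ft. *)
Record frame := Frame { fl : R; fr : R; fb : R; ft : R }.

Definition nondeg (F : frame) : Prop := fl F < fr F /\ fb F < ft F.

Definition pt := (R * R)%type.

Definition region (F : frame) (p : pt) : Prop :=
  fl F <= p.1 <= fr F /\ fb F <= p.2 <= ft F.

Definition left_side (F : frame) (p : pt) : Prop :=
  p.1 = fl F /\ fb F <= p.2 <= ft F.
Definition right_side (F : frame) (p : pt) : Prop :=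
  p.1 = fr F /\ fb F <= p.2 <= ft F.
Definition bottom_side (F : frame) (p : pt) : Prop :=
  p.2 = fb F /\ fl F <= p.1 <= fr F.
Definition top_side (F : frame) (p : pt) : Prop :=
  p.2 = ft F /\ fl F <= p.1 <= fr F.

Definition on_frame (F : frame) (p : pt) : Prop :=
  left_side F p \/ right_side F p \/ bottom_side F p \/ top_side F p.

Definition corner (F : frame) (p : pt) : Prop :=
  (p.1 = fl F \/ p.1 = fr F) /\ (p.2 = fb F \/ p.2 = ft F).

Definition meets (A B : pt -> Prop) : Prop := exists p, A p /\ B p.

Definition frames_meet (F1 F2 : frame) : Prop := meets (on_frame F1) (on_frame F2).

Definition frame_contains (F1 F2 : frame) : Prop :=
  ~ frames_meet F1 F2 /\ (forall p, on_frame F2 p -> region F1 p).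

Definition restricted_frame_rep (V : finType) (adj : rel V) (F : V -> frame) : Prop :=
  (forall x, nondeg (F x)) /\
  (forall x y, x != y -> (adj x y <-> frames_meet (F x) (F y))) /\
  (* (1) corners of a frame do not lie on another frame *)
  (forall x y, x != y -> forall p, corner (F x) p -> ~ on_frame (F y) p) /\
  (* (2) the left side of a frame does not meet any other frame *)
  (forall x y, x != y -> ~ meets (left_side (F x)) (on_frame (F y))) /\
  (* (3) right side meeting another frame meets both its top and bottom side *)
  (forall x y, x != y -> meets (right_side (F x)) (on_frame (F y)) ->
      meets (right_side (F x)) (top_side (F y)) /\
      meets (right_side (F x)) (bottom_side (F y))) /\
  (forall x y, x != y -> frames_meet (F x) (F y) ->
     forall z, z != x -> z != y ->
       ~ (forall p, on_frame (F z) p -> region (F x) p /\ region (F y) p)).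

End Frames.

Definition simple_graph (V : finType) (adj : rel V) : Prop :=
  symmetric adj /\ irreflexive adj.

Definition induced_cycle (V : finType) (adj : rel V) (k : nat) (c : 'I_k -> V) : Prop :=
  (3 <= k)%N /\ injective c /\
  (forall i j : 'I_k,
     adj (c i) (c j) = ((val j == (val i).+1 %% k) || (val i == (val j).+1 %% k))%N).

Definition closed_nbhd (V : finType) (adj : rel V) (v u : V) : bool := (u == v) || adj v u.

(* Let z be the cycle vertex whose frame reaches furthest to the right, and let p, q be its
   two cycle neighbours. By restrictions (1)-(3) a frame meeting F_z from the left must
   contain the top-left corner of F_z in its region, so the regions of F_p and F_q share a
   point. When the cycle has at least four vertices, p and q are not adjacent, so their
   disjoint frames are nested, say F_q strictly inside F_p. The path of the cycle from q
   away from z visits exactly the non-neighbours of p; consecutive frames on it meet and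
   none meets F_p, so every one of them stays strictly inside F_p: p is the wanted vertex.
   Two non-adjacent such vertices would each contain the other's frame, which is absurd. *)
From HB Require Import structures.
From mathcomp Require Import all_boot all_order all_algebra.
From mathcomp Require Import reals.
From mathcomp Require Import lra zify.
Set Implicit Arguments. Unset Strict Implicit. Unset Printing Implicit Defensive.
Import Order.TTheory GRing.Theory Num.Theory.

Section FrameGeometry.
Variable R : realType.
Local Open Scope ring_scope.
Implicit Types F G H : frame R.

Definition strictly_inside F G :=
  fl G < fl F /\ fr F < fr G /\ fb G < fb F /\ ft F < ft G.

Lemma on_frame_region F p : nondeg F -> on_frame F p -> region F p.
Proof.
case=> h1 h2; case: p => x y.
case=> [[/= -> /andP[a b]]|[[/= -> /andP[a b]]|[[/= -> /andP[a b]]|[/= -> /andP[a b]]]]];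
  by split; apply/andP; split => /=; lra.
Qed.

Lemma intervals_nest_or_cross (a b c d : R) : a <= b -> c <= d -> c <= b -> a <= d ->
  (a < c /\ d < b) \/ (c < a /\ b < d) \/
  ((exists e, (e = c \/ e = d) /\ a <= e <= b) /\
   (exists e, (e = a \/ e = b) /\ c <= e <= d)).
Proof.
move=> ab cd cb ad.
case: (ltrP a c) => ac.
  case: (ltrP d b) => db; first by left.
  right; right; split; [exists c | exists b]; split; try (by left); try (by right);
    by apply/andP; split; lra.
case: (ltrP c a) => ca.
  case: (ltrP b d) => bd; first by right; left.
  right; right; split; [exists d | exists a]; split; try (by left); try (by right);
    by apply/andP; split; lra.
right; right; split; [exists c | exists a]; split; try (by left); try (by right);
  by apply/andP; split; lra.
Qed.

(* Unless the projections on both axes are nested the same way, a vertical side of one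
   frame meets a horizontal side of the other. *)
Lemma disjoint_frames_nest F G p : nondeg F -> nondeg G -> ~ frames_meet F G ->
  region F p -> region G p -> strictly_inside G F \/ strictly_inside F G.
Proof.
case=> f1 f2 [g1 g2] nm [/andP[p1 p2] /andP[p3 p4]] [/andP[q1 q2] /andP[q3 q4]].
have hx := intervals_nest_or_cross (ltW f1) (ltW g1) (le_trans q1 p2) (le_trans p1 q2).
have hy := intervals_nest_or_cross (ltW f2) (ltW g2) (le_trans q3 p4) (le_trans p3 q4).
case: hx => [[x1 x2]|[[x1 x2]|[[ex [hex1 /andP[hex2 hex3]]] [ex' [hex1' /andP[hex2' hex3']]]]]];
case: hy => [[y1 y2]|[[y1 y2]|[[ey [hey1 /andP[hey2 hey3]]] [ey' [hey1' /andP[hey2' hey3']]]]]].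
- by left; rewrite /strictly_inside; lra.
- exfalso; apply: nm; exists (fl G, ft F); split.
    by right; right; right; split => //=; apply/andP; lra.
  by left; split => //=; apply/andP; lra.
- exfalso; apply: nm; exists (fl G, ey'); split.
    by right; right; case: hey1' => ->; [left|right]; split => //=; apply/andP; lra.
  by left; split => //=; apply/andP; lra.
- exfalso; apply: nm; exists (fl F, ft G); split.
    by left; split => //=; apply/andP; lra.
  by right; right; right; split => //=; apply/andP; lra.
- by right; rewrite /strictly_inside; lra.
- exfalso; apply: nm; exists (fl F, ey); split.
    by left; split => //=; apply/andP; lra.
  by right; right; case: hey1 => ->; [left|right]; split => //=; apply/andP; lra.
- exfalso; apply: nm; exists (ex', fb G); split.
    by case: hex1' => ->; [left|right; left]; split => //=; apply/andP; lra.
  by right; right; left; split => //=; apply/andP; lra.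
- exfalso; apply: nm; exists (ex, fb F); split.
    by right; right; left; split => //=; apply/andP; lra.
  by case: hex1 => ->; [left|right; left]; split => //=; apply/andP; lra.
- exfalso; apply: nm; exists (ex, ey'); split.
    by right; right; case: hey1' => ->; [left|right]; split => //=; apply/andP; lra.
  by case: hex1 => ->; [left|right; left]; split => //=; apply/andP; lra.
Qed.

(* Of the two left ends of the horizontal segments, the right one is a corner lying
   on the other frame. *)
Lemma horizontal_sides_disjoint F G (m : pt R) :
  (forall p, corner F p -> ~ on_frame G p) -> (forall p, corner G p -> ~ on_frame F p) ->
  (m.2 = fb F \/ m.2 = ft F) -> fl F <= m.1 <= fr F ->
  (m.2 = fb G \/ m.2 = ft G) -> fl G <= m.1 <= fr G -> False.
Proof.
case: m => x y /= cFG cGF hF /andP[a b] hG /andP[c d].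
case: (lerP (fl F) (fl G)) => h.
  apply: (cGF (fl G, y)); first by split => //=; left.
  by right; right; case: hF => ->; [left|right]; split => //=; apply/andP; lra.
apply: (cFG (fl F, y)); first by split => //=; left.
by right; right; case: hG => ->; [left|right]; split => //=; apply/andP; lra.
Qed.

Lemma strictly_inside_meeting F G H : nondeg F -> nondeg G -> nondeg H ->
  ~ frames_meet F G -> frames_meet G H -> strictly_inside H F -> strictly_inside G F.
Proof.
move=> nF nG nH nm [m [mG mH]] HF.
have rH := on_frame_region nH mH; have rG := on_frame_region nG mG.
have rF : region F m.
  move: rH HF; case: m {mG mH rG} => x y [/andP[a b] /andP[c d]].
  rewrite /strictly_inside => ?; by split; apply/andP; split; lra.
case: (disjoint_frames_nest nF nG nm rF rG) => // FG; exfalso.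
move: mG rH HF FG; case: m {rF rG mH} => x y /= + [/andP[a b] /andP[c d]].
by case=> [[e _]|[[e _]|[[e _]|[e _]]]]; rewrite /strictly_inside => ? ?; simpl in *; lra.
Qed.

Lemma strictly_inside_frame_contains F G :
  nondeg G -> ~ frames_meet F G -> strictly_inside G F -> frame_contains F G.
Proof.
move=> nG nm GF; split => // m /(on_frame_region nG).
move: GF; case: m => x y [? [? [? ?]]] [/andP[a b] /andP[c d]] /=.
by split; apply/andP; split; lra.
Qed.

Lemma frame_contains_asym F G : nondeg F -> nondeg G ->
  frame_contains F G -> ~ frame_contains G F.
Proof.
move=> [f1 f2] [g1 g2] [nm FG] [_ GF].
have [/andP[a _] /andP[b _]] : region F (fl G, fb G).
  by apply: FG; left; split => //=; apply/andP; lra.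
have [/andP[c _] /andP[d _]] : region G (fl F, fb F).
  by apply: GF; left; split => //=; apply/andP; lra.
apply: nm; exists (fl F, fb F); simpl in *.
by split; left; split => /=; try lra; apply/andP; split; lra.
Qed.

Lemma chain_strictly_inside (w : nat -> frame R) X n :
  (forall d, (d <= n)%N -> nondeg (w d)) -> nondeg X ->
  (forall d, (d <= n)%N -> ~ frames_meet X (w d)) ->
  (forall d, (d < n)%N -> frames_meet (w d.+1) (w d)) ->
  strictly_inside (w 0%N) X -> forall d, (d <= n)%N -> strictly_inside (w d) X.
Proof.
move=> nd nX nm me w0; elim=> [//|d IH] lt_dn.
apply: (strictly_inside_meeting nX (nd _ lt_dn) (nd _ (ltnW lt_dn)) (nm _ lt_dn)).
  exact: me.
exact: IH (ltnW lt_dn).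
Qed.

End FrameGeometry.

Section RestrictedRepresentation.
Variables (R : realType) (V : finType) (adj : rel V) (F : V -> frame R).
Hypothesis F_rep : restricted_frame_rep adj F.
Local Open Scope ring_scope.

(* By (2) the frames cannot meet on the left side of F x, and by (3) and (1) not on a
   horizontal side of F x either; so the right side of F x crosses F y between its top and
   bottom, and (2) forces the left side of F x to lie left of F y. *)
Lemma meeting_region_top_left x y : x != y -> frames_meet (F x) (F y) ->
  fr (F x) <= fr (F y) -> region (F x) (fl (F y), ft (F y)).
Proof.
case: F_rep => nd [_ [r1 [r2 [r3 _]]]] xy [m [mx my]] fr_xy.
have yx : y != x by rewrite eq_sym.
have [fx1 fx2] := nd x; have [fy1 fy2] := nd y.
case: mx => [mx|[mx|mx]].
- by exfalso; apply: (r2 x y xy); exists m.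
- have [[t [[t1 /andP[t2 t3]] [t4 /andP[t5 t6]]]] _] := r3 x y xy (ex_intro _ m (conj mx my)).
  case: (lerP (fl (F x)) (fl (F y))) => hl.
    by split; apply/andP => /=; split; lra.
  exfalso; apply: (r2 x y xy); exists (fl (F x), ft (F y)); split.
    by split => //=; apply/andP; lra.
  by right; right; right; split => //=; apply/andP; lra.
- have [hx1 hx2] : (m.2 = fb (F x) \/ m.2 = ft (F x)) /\ fl (F x) <= m.1 <= fr (F x).
    by case: mx => [[-> h]|[-> h]]; split => //; [left|right].
  exfalso; case: my => [my|[my|my]].
  + by apply: (r2 y x yx); exists m; split => //; right; right.
  + have [[t [[t1 /andP[t2 t3]] [t4 /andP[t5 t6]]]] _] :=
      r3 y x yx (ex_intro _ m (conj my (or_intror (or_intror mx)))).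
    apply: (r1 x y xy (fr (F x), ft (F x))); first by split => /=; right.
    by right; left; split => /=; [lra|apply/andP; lra].
  + apply: (horizontal_sides_disjoint (r1 x y xy) (r1 y x yx) hx1 hx2).
      by case: my => [[-> _]|[-> _]]; [left|right].
    by case: my => [[_ h]|[_ h]].
Qed.

End RestrictedRepresentation.

Section CycleFrom.
Variables (V : finType) (adj : rel V) (n : nat) (c : 'I_n.+1 -> V).
Hypothesis c_cycle : induced_cycle adj c.

Definition cycle_from (z : 'I_n.+1) (t : nat) : V := c (inord ((z + t) %% n.+1)).

Lemma cycle_from0 z : cycle_from z 0 = c z.
Proof. by rewrite /cycle_from addn0 modn_small // inord_val. Qed.

Lemma cycle_from_onto z (j : 'I_n.+1) : exists2 t, t <= n & c j = cycle_from z t.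
Proof.
exists ((j + (n.+1 - z)) %% n.+1); first by rewrite -ltnS ltn_pmod.
have z_lt := ltn_ord z.
rewrite /cycle_from modnDmr (_ : z + (j + (n.+1 - z)) = j + n.+1); last by lia.
by rewrite modnDr modn_small // inord_val.
Qed.

Lemma cycle_from_inj z t1 t2 : t1 <= n -> t2 <= n ->
  cycle_from z t1 = cycle_from z t2 -> t1 = t2.
Proof.
have [_ [c_inj _]] := c_cycle; move=> le1 le2.
move/c_inj/(congr1 val); rewrite /= !inordK ?ltn_pmod // => /eqP.
by rewrite eqn_modDl !modn_small ?ltnS // => /eqP.
Qed.

Lemma cycle_from_adj z t1 t2 : t1 <= n -> t2 <= n ->
  adj (cycle_from z t1) (cycle_from z t2) =
  [|| t2 == t1.+1, t1 == t2.+1, (t1 == 0) && (t2 == n) | (t2 == 0) && (t1 == n)].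
Proof.
have [_ [_ c_adj]] := c_cycle; move=> le1 le2.
have modS m : (m %% n.+1).+1 %% n.+1 = m.+1 %% n.+1 by rewrite -addn1 modnDml addn1.
have succ t : t <= n -> t.+1 %% n.+1 = if t == n then 0 else t.+1.
  by move=> le; case: eqP => [->|ne]; [rewrite modnn | rewrite modn_small //; lia].
rewrite c_adj /= !inordK ?ltn_pmod // !modS -!addnS !eqn_modDl.
rewrite !(modn_small (_ : t1 < n.+1)) // !(modn_small (_ : t2 < n.+1)) //.
rewrite (succ _ le1) (succ _ le2).
by case: (t1 =P n) => e1; case: (t2 =P n) => e2; lia.
Qed.

End CycleFrom.

Section Host.
Variables (R : realType) (V : finType) (adj : rel V) (F : V -> frame R).
Variables (n : nat) (c : 'I_n.+1 -> V).
Hypotheses (F_rep : restricted_frame_rep adj F) (c_cycle : induced_cycle adj c).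
Local Open Scope ring_scope.

Definition hosts (v : V) := forall j : 'I_n.+1,
  ~~ closed_nbhd adj v (c j) -> frame_contains (F v) (F (c j)).

Lemma hosts_adj (adj_sym : symmetric adj) (i i' : 'I_n.+1) :
  c i' <> c i -> hosts (c i) -> hosts (c i') -> adj (c i') (c i).
Proof.
case: F_rep => nd _ ne host host'; case nadj: (adj (c i') (c i)) => //; exfalso.
apply: (frame_contains_asym (nd (c i')) (nd (c i))).
  by apply: host'; rewrite /closed_nbhd negb_or nadj andbT; apply/eqP => e; apply: ne.
apply: host; rewrite /closed_nbhd negb_or adj_sym nadj andbT.
by apply/eqP => e; apply: ne.
Qed.

Lemma cycle_from_meet z t1 t2 : (t1 <= n)%N -> (t2 <= n)%N -> t1 <> t2 ->
  frames_meet (F (cycle_from c z t1)) (F (cycle_from c z t2)) <->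
  adj (cycle_from c z t1) (cycle_from c z t2).
Proof.
case: F_rep => _ [meet_adj _] le1 le2 ne; apply: iff_sym; apply: meet_adj.
by apply/eqP => /(cycle_from_inj c_cycle le1 le2).
Qed.

Lemma hosts_cycle_from z t : (t <= n)%N ->
  (forall t', (t' <= n)%N -> t' <> t -> ~~ adj (cycle_from c z t) (cycle_from c z t') ->
     frame_contains (F (cycle_from c z t)) (F (cycle_from c z t'))) ->
  hosts (cycle_from c z t).
Proof.
move=> le host j; have [t' le' ->] := cycle_from_onto c z j.
rewrite /closed_nbhd negb_or => /andP[/eqP ne nadj].
by apply: host => // e; apply: ne; rewrite e.
Qed.

Section RightmostStart.
Variable z : 'I_n.+1.
Hypothesis z_rightmost : forall j, fr (F (c j)) <= fr (F (c z)).
Hypothesis n_ge3 : (3 <= n)%N.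
Let w := cycle_from c z.

Lemma nested_neighbours_of_rightmost :
  strictly_inside (F (w n)) (F (w 1)) \/ strictly_inside (F (w 1)) (F (w n)).
Proof.
have nd := F_rep.1.
have left_of_z t : (t <= n)%N -> t <> 0%N -> adj (w t) (w 0) ->
    region (F (w t)) (fl (F (w 0)), ft (F (w 0))).
  move=> le ne0 a; apply: (meeting_region_top_left F_rep).
  - by apply/eqP => /(cycle_from_inj c_cycle le (leq0n n)).
  - by apply/(cycle_from_meet z le (leq0n n) ne0).
  - by rewrite /w cycle_from0; apply: z_rightmost.
apply: (disjoint_frames_nest (nd _) (nd _)).
- have [le1 ne1n] : (1 <= n)%N /\ 1%N <> n by lia.
  by move/(cycle_from_meet z le1 (leqnn n) ne1n); rewrite cycle_from_adj //; lia.
- by apply: left_of_z; rewrite ?cycle_from_adj //; lia.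
- by apply: left_of_z; rewrite ?cycle_from_adj //; lia.
Qed.

Lemma consecutive_meet t1 t2 : (t1 <= n)%N -> (t2 <= n)%N ->
  (t2 == t1.+1) || (t1 == t2.+1) -> frames_meet (F (w t1)) (F (w t2)).
Proof.
move=> le1 le2 near; apply/(cycle_from_meet z le1 le2); first by lia.
by rewrite cycle_from_adj //; lia.
Qed.

Lemma hosts_first_of_nested : strictly_inside (F (w n)) (F (w 1)) -> hosts (w 1).
Proof.
have nd := F_rep.1; move=> inner.
have far s : (3 <= s <= n)%N -> ~ frames_meet (F (w 1)) (F (w s)).
  case/andP=> s3 sn; have [le1 ne] : (1 <= n)%N /\ 1%N <> s by lia.
  by move/(cycle_from_meet z le1 sn ne); rewrite cycle_from_adj //; lia.
apply: hosts_cycle_from => // [|t le ne]; first by lia.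
rewrite cycle_from_adj //; last by lia.
move=> nadj; have t3 : (3 <= t)%N by lia.
apply: strictly_inside_frame_contains (nd _) (far _ _) _; first by rewrite t3.
have := chain_strictly_inside (w := fun d => F (w (n - d))) (X := F (w 1)) (n := n - 3).
rewrite subn0 => /(_ (fun _ _ => nd _) (nd _)); rewrite -(subKn le).
apply.
- by move=> d ld; apply: far; apply/andP; lia.
- by move=> d ld; apply: consecutive_meet; lia.
- exact: inner.
- lia.
Qed.

Lemma hosts_last_of_nested : strictly_inside (F (w 1)) (F (w n)) -> hosts (w n).
Proof.
have nd := F_rep.1; move=> inner.
have far s : (1 <= s <= n - 2)%N -> ~ frames_meet (F (w n)) (F (w s)).
  case/andP=> s1 sn; have [le ne] : (s <= n)%N /\ n <> s by lia.
  by move/(cycle_from_meet z (leqnn n) le ne); rewrite cycle_from_adj //; lia.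
apply: hosts_cycle_from => // t le ne.
rewrite cycle_from_adj //.
move=> nadj; have t1 : (1 <= t <= n - 2)%N by lia.
apply: strictly_inside_frame_contains (nd _) (far _ t1) _.
have := chain_strictly_inside (w := fun d => F (w (1 + d))) (X := F (w n)) (n := n - 3).
rewrite addn0 => /(_ (fun _ _ => nd _) (nd _)); rewrite -(subnKC (proj1 (andP t1))).
apply.
- by move=> d ld; apply: far; apply/andP; lia.
- by move=> d ld; apply: consecutive_meet; lia.
- exact: inner.
- lia.
Qed.

End RightmostStart.

Lemma exists_host : exists i, hosts (c i).
Proof.
have [z _ z_max] := @arg_maxP _ _ 'I_n.+1 ord0 xpredT (fun i => fr (F (c i))) isT.
have z_rightmost j : fr (F (c j)) <= fr (F (c z)) by apply: z_max.
have host_of t : hosts (cycle_from c z t) -> exists i, hosts (c i).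
  by move=> host; exists (inord ((z + t) %% n.+1)).
case: (ltnP n 3) => [n_lt3|n_ge3].
  have [k_ge3 _] := c_cycle.
  apply: (host_of 1%N); apply: hosts_cycle_from => [|t le ne]; first lia.
  by rewrite cycle_from_adj //; lia.
case: (nested_neighbours_of_rightmost z_rightmost n_ge3) => inner.
  by apply: (host_of 1%N); apply: hosts_first_of_nested.
by apply: (host_of n); apply: hosts_last_of_nested.
Qed.

End Host.

Theorem lemma3p7 (R : realType) (V : finType) (adj : rel V) (F : V -> frame R)
  (k : nat) (c : 'I_k -> V) :
  simple_graph adj ->
  restricted_frame_rep adj F ->
  induced_cycle adj c ->
  exists i : 'I_k,
    (forall j : 'I_k, ~~ closed_nbhd adj (c i) (c j) ->
        frame_contains (F (c i)) (F (c j))) /\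
    (forall i' : 'I_k, c i' <> c i ->
       (forall j : 'I_k, ~~ closed_nbhd adj (c i') (c j) ->
          frame_contains (F (c i')) (F (c j))) ->
       adj (c i') (c i)).
Proof.
move=> [adj_sym _] F_rep; case: k c => [c [] //|n c c_cycle].
have [i host_i] := exists_host F_rep c_cycle.
exists i; split=> // i' ne host_i'.
exact: (hosts_adj F_rep adj_sym ne host_i host_i').
Qed.
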